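(* Let $(X,\mathcal{R})$ be a partially metric association scheme with respect to $R_1$, whose scheme graph $\Gamma$ is connected with valency $k=3$ and $a_1=p^1_{11}=0$. Let $E$ be a minimal scheme idempotent with multiplicity three and let $\theta$ be the corresponding eigenvalue of $\Gamma$ on $E$. Let $u_1,u_2$ be adjacent vertices of $\Gamma$, let $v_1,v_2$ be the other two neighbors of $u_1$, and let $v_3,v_4$ be the other two neighbors of $u_2$. Fix any vertex $x$ and put $\psi_i=\omega_{xu_i}$ ($i=1,2$) and $\phi_i=\omega_{xv_i}$ ($i=1,2,3,4$). Then $$\{\phi_3,\phi_4\}=\left\{\tfrac12\big(\theta\psi_2-\psi_1+(\phi_1-\phi_2)\big),\ \tfrac12\big(\theta\psi_2-\psi_1-(\phi_1-\phi_2)\big)\right\}.$$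
   Context: A (symmetric) association scheme with rank $d+1$ on a finite set $X$ ($|X|=n$) is a partition $\mathcal{R}=\{R_0,\dots,R_d\}$ of $X\times X$ with $R_0$ the diagonal, each $R_i$ symmetric, and numbers $p^h_{ij}$ such that for every $(x,y)\in R_h$ the number of $z$ with $(x,z)\in R_i$, $(z,y)\in R_j$ equals $p^h_{ij}$. The scheme graph of $R_1$ is the graph on $X$ with $x\sim y$ iff $(x,y)\in R_1$, with adjacency matrix $A_1$. The Bose–Mesner algebra has a basis of minimal scheme idempotents $E_0=\frac1nJ,\dots,E_d$; the multiplicity of $E_j$ is its rank, and if $A_1E_j=\theta E_j$ then $\theta$ is the corresponding eigenvalue on $E_j$. The scheme is partially metric with respect to the connected relation $R_1$ if the distance-$2$ relation of its scheme graph is a relation of the scheme. The cosine for $E$ of a pair $(x,y)$ is $\omega_{xy}=E_{xy}/E_{xx}$ (this depends only on the relation containing $(x,y)$). *)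

From HB Require Import structures.
From mathcomp Require Import all_boot all_order all_algebra all_field.
Set Implicit Arguments. Unset Strict Implicit. Unset Printing Implicit Defensive.
Import Order.TTheory GRing.Theory Num.Theory.
Local Open Scope ring_scope.

(* A (symmetric) association scheme of rank d+1 on the vertex set X = 'I_n
   is encoded by its "class" function c : X -> X -> 'I_(d.+1):
   (x,y) \in R_i  <->  c x y = i.  The relation R_1 is  inord 1. *)

Definition R1 {d : nat} : 'I_d.+1 := inord 1.

Definition is_assoc_scheme (n d : nat) (c : 'I_n -> 'I_n -> 'I_d.+1)
  (p : 'I_d.+1 -> 'I_d.+1 -> 'I_d.+1 -> nat) : Prop :=
  [/\ (forall x y, (c x y == ord0) = (x == y)),
      (forall x y, c x y = c y x),
      (forall i, exists x y, c x y = i)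
    & (forall i j x y,
         #|[set z | (c x z == i) && (c z y == j)]| = p (c x y) i j) ].

Definition adj (n d : nat) (c : 'I_n -> 'I_n -> 'I_d.+1) : rel 'I_n :=
  fun x y => c x y == R1.

Definition graph_connected (n d : nat) (c : 'I_n -> 'I_n -> 'I_d.+1) : Prop :=
  forall x y, connect (adj c) x y.

Definition dist2 (n d : nat) (c : 'I_n -> 'I_n -> 'I_d.+1) (x y : 'I_n) : bool :=
  [&& x != y, ~~ adj c x y & [exists z, adj c x z && adj c z y]].

Definition partially_metric (n d : nat) (c : 'I_n -> 'I_n -> 'I_d.+1) : Prop :=
  exists j : 'I_d.+1, forall x y, dist2 c x y = (c x y == j).

Definition rel_mx (n d : nat) (c : 'I_n -> 'I_n -> 'I_d.+1) (i : 'I_d.+1)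
  : 'M[algC]_n := \matrix_(x, y) ((c x y == i)%:R).

Definition in_bose_mesner (n d : nat) (c : 'I_n -> 'I_n -> 'I_d.+1)
  (E : 'M[algC]_n) : Prop :=
  exists a : 'I_d.+1 -> algC, E = \sum_(i < d.+1) a i *: rel_mx c i.

Definition minimal_idempotent (n d : nat) (c : 'I_n -> 'I_n -> 'I_d.+1)
  (E : 'M[algC]_n) : Prop :=
  [/\ in_bose_mesner c E, E *m E = E, E != 0
    & forall F, in_bose_mesner c F -> F *m F = F -> F *m E = F ->
        F = 0 \/ F = E ].

Definition cosine (n : nat) (E : 'M[algC]_n) (x y : 'I_n) : algC :=
  E x y / E x x.

From HB Require Import structures.
From mathcomp Require Import all_boot all_order all_algebra all_field.
From mathcomp Require Import ring.
Set Implicit Arguments.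
Unset Strict Implicit.
Unset Printing Implicit Defensive.

Import Order.TTheory GRing.Theory Num.Theory.
Local Open Scope ring_scope.

(* Write E_ab = al (c a b).  Since the scheme graph is triangle-free and the
   distance-2 relation is a class j, the vertices t1 ~ t2, two further
   neighbours v, v' of t1, and x have an E-Gram pattern depending only on
   al 0, al 1, al j and E_x t1, E_x t2.  As E has rank 3, the rows E_t1, E_t2,
   E_v - E_v', E_x are dependent, which yields
     (al0^2 - al1^2) (E_xv - E_xv')^2 = (2 al0 - 2 alj) gram3_det(E_xt1, E_xt2)
   with gram3_det symmetric in its last two arguments.  Applied to (u1, u2) and
   to (u2, u1) this gives (phi3 - phi4)^2 = (phi1 - phi2)^2, provided
   al0^2 <> al1^2; otherwise theta = +-3 and a summed-squares argument makes
   every column of E constant up to sign along edges, forcing rank E <= 1.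
   Finally phi3 + phi4 = theta psi2 - psi1 because E is an eigenspace of A_1. *)

Lemma sum_indicator_rel (T : finType) (R : pzRingType) (r : rel T) x (F : T -> R) :
  \sum_y (r x y)%:R * F y = \sum_(y in [set y | r x y]) F y.
Proof.
rewrite [RHS]big_mkcond; apply: eq_bigr => y _; rewrite inE.
by case: (r x y); rewrite ?mul1r ?mul0r.
Qed.

Lemma sum_card3 (T : finType) (R : nmodType) (A : {set T}) (a b c : T) (F : T -> R) :
  #|A| = 3%N -> a \in A -> b \in A -> c \in A -> a != b -> a != c -> b != c ->
  \sum_(y in A) F y = F a + F b + F c.
Proof.
move=> A3 aA bA cA ab ac bc.
have a_notin_bc : a \notin [set b; c] by rewrite !inE negb_or ab ac.
have -> : A = a |: [set b; c].
  apply/eqP; rewrite eq_sym eqEcard A3 cardsU1 cards2 a_notin_bc bc andbT.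
  by apply/subsetP => y; rewrite !inE => /or3P[] /eqP ->.
by rewrite big_setU1 //= big_setU1 ?big_set1 ?inE //= addrA.
Qed.

Lemma exists_nonzero_left_kernel (F : fieldType) m n (R : 'M[F]_(m, n)) :
  (\rank R < m)%N -> exists2 w : 'rV_m, w != 0 & w *m R = 0.
Proof.
move=> ltRm; have : kermx R != 0.
  by rewrite -mxrank_eq0 mxrank_ker subn_eq0 -ltnNge.
by case/rowV0Pn => w /sub_kermxP wR0 w0; exists w.
Qed.

Section ConnectedRows.
Variables (F : fieldType) (m n : nat) (r : rel 'I_m) (A : 'M[F]_(m, n)).
Hypothesis rowA_edge : forall x y, r x y -> (row y A <= row x A)%MS.

Lemma row_sub_connect x y : connect r x y -> (row y A <= row x A)%MS.
Proof.
case/connectP => s; elim: s x => [|z s IH] x /=; first by move=> _ ->.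
by case/andP => rxz zs yzs; apply: submx_trans (IH z zs yzs) (rowA_edge rxz).
Qed.

Lemma mxrank_le1_connected : (forall x y, connect r x y) -> (\rank A <= 1)%N.
Proof.
move=> conn; case: (pickP 'I_m) => [u _ | no_vertex].
  apply: leq_trans (mxrankS _) (rank_leq_row (row u A)).
  by apply/row_subP => y; apply: row_sub_connect.
suff -> : A = 0 by rewrite mxrank0.
by apply/matrixP => i; have := no_vertex i.
Qed.

End ConnectedRows.

Section ExtremalEigenvector.
Variables (C : numClosedFieldType) (n k : nat) (r : rel 'I_n) (e : C) (f : 'I_n -> C).
Hypotheses (r_sym : forall x y, r x y = r y x)
  (r_reg : forall x, #|[set y | r x y]| = k)
  (e_sq : e ^+ 2 = 1) (e_real : e^* = e)
  (f_eigen : forall x, \sum_y (r x y)%:R * f y = k%:R * e * f x).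

Let A x y : C := (r x y)%:R.

Lemma eigvec_edge_eq x y : r x y -> f x = e * f y.
Proof.
have deg i : \sum_j A i j = k%:R.
  rewrite -(r_reg i) -sumr_const -sum_indicator_rel.
  by apply: eq_bigr => j _; rewrite mulr1.
have row_sum i : \sum_j A i j * (f i - e * f j) = 0.
  have -> : \sum_j A i j * (f i - e * f j) = f i * \sum_j A i j - e * \sum_j A i j * f j.
    by rewrite !mulr_sumr -sumrB; apply: eq_bigr => j _; ring.
  rewrite deg f_eigen.
  by transitivity (k%:R * f i * (1 - e ^+ 2)); [ring | rewrite e_sq subrr mulr0].
have col_sum j : \sum_i A i j * (f i - e * f j) = 0.
  have -> : \sum_i A i j * (f i - e * f j) = \sum_i A j i * f i - e * f j * \sum_i A j i.
    by rewrite mulr_sumr -sumrB; apply: eq_bigr => i _; rewrite /A r_sym; ring.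
  by rewrite f_eigen deg; ring.
(* Row and column sums vanish, hence so does sum_ij A_ij |f_i - e f_j|^2. *)
have quad0 : \sum_i \sum_j A i j * ((f i - e * f j) * (f i - e * f j)^*) = 0.
  rewrite (eq_bigr (fun i => (\sum_j A i j * (f i - e * f j)) * (f i)^*
    - e * \sum_j A i j * (f i - e * f j) * (f j)^*)); last first.
    move=> i _; rewrite mulr_suml mulr_sumr -sumrB; apply: eq_bigr => j _.
    by rewrite rmorphB rmorphM /= e_real; ring.
  rewrite sumrB -mulr_sumr exchange_big /=.
  under eq_bigr do rewrite row_sum mul0r.
  under [X in _ - _ * X]eq_bigr do rewrite -mulr_suml col_sum mul0r.
  by rewrite !big1 // mulr0 subr0.
have term_ge0 i j : 0 <= A i j * ((f i - e * f j) * (f i - e * f j)^*).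
  by rewrite mulr_ge0 ?ler0n ?mul_conjC_ge0.
move=> rxy.
have row_x0 : \sum_j A x j * ((f x - e * f j) * (f x - e * f j)^*) = 0.
  by apply: (psumr_eq0P _ quad0) => // i _; apply: sumr_ge0.
move/(_ y isT)/eqP: (psumr_eq0P (fun j _ => term_ge0 x j) row_x0).
by rewrite /A rxy mul1r mul_conjC_eq0 subr_eq0 => /eqP.
Qed.

End ExtremalEigenvector.

Section GramDeterminant.
Variable F : fieldType.

(* The determinant of [[a0, a1, p1], [a1, a0, p2], [p1, p2, a0]]. *)
Definition gram3_det (a0 a1 p1 p2 : F) :=
  a0 * (a0 ^+ 2 - a1 ^+ 2) - (a0 * p1 ^+ 2 - 2 * a1 * p1 * p2 + a0 * p2 ^+ 2).

Lemma gram3_detC a0 a1 p1 p2 : gram3_det a0 a1 p1 p2 = gram3_det a0 a1 p2 p1.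
Proof. by rewrite /gram3_det; ring. Qed.

(* (c0, c1, c2, c3) is a kernel vector of
   [[a0, a1, 0, p1], [a1, a0, 0, p2], [0, 0, N, q], [p1, p2, q, a0]],
   whose determinant is N * gram3_det a0 a1 p1 p2 - (a0^2 - a1^2) q^2. *)
Lemma gram4_kernel_det (a0 a1 N q p1 p2 c0 c1 c2 c3 : F) :
  a0 ^+ 2 - a1 ^+ 2 != 0 -> ~~ [&& c0 == 0, c1 == 0, c2 == 0 & c3 == 0] ->
  c0 * a0 + c1 * a1 + c3 * p1 = 0 -> c0 * a1 + c1 * a0 + c3 * p2 = 0 ->
  c2 * N + c3 * q = 0 -> c0 * p1 + c1 * p2 + c2 * q + c3 * a0 = 0 ->
  (a0 ^+ 2 - a1 ^+ 2) * q ^+ 2 = N * gram3_det a0 a1 p1 p2.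
Proof.
set D := a0 ^+ 2 - a1 ^+ 2 => D_nz c_nz e0 e1 e2 e3.
have [c3_0 | c3_nz] := eqVneq c3 0; last first.
  apply: (mulIf c3_nz); apply/eqP; rewrite -subr_eq0; apply/eqP.
  transitivity (D * q * (c2 * N + c3 * q)
    - N * (D * (c0 * p1 + c1 * p2 + c2 * q + c3 * a0)
           - p1 * (a0 * (c0 * a0 + c1 * a1 + c3 * p1) - a1 * (c0 * a1 + c1 * a0 + c3 * p2))
           - p2 * (a0 * (c0 * a1 + c1 * a0 + c3 * p2) - a1 * (c0 * a0 + c1 * a1 + c3 * p1)))).
    by rewrite /gram3_det /D; ring.
  by rewrite e0 e1 e2 e3 !(mulr0, subrr, subr0).
rewrite c3_0 !mul0r !addr0 in e0 e1 e2 e3.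
have c0_0 : c0 = 0.
  apply: (mulIf D_nz); rewrite mul0r.
  transitivity (a0 * (c0 * a0 + c1 * a1) - a1 * (c0 * a1 + c1 * a0)).
    by rewrite /D; ring.
  by rewrite e0 e1 !mulr0 subrr.
have c1_0 : c1 = 0.
  apply: (mulIf D_nz); rewrite mul0r.
  transitivity (a0 * (c0 * a1 + c1 * a0) - a1 * (c0 * a0 + c1 * a1)).
    by rewrite /D; ring.
  by rewrite e0 e1 !mulr0 subrr.
have c2_nz : c2 != 0 by move: c_nz; rewrite c0_0 c1_0 c3_0 !eqxx andbT.
have N_0 : N = 0 by apply: (mulfI c2_nz); rewrite mulr0.
have q_0 : q = 0.
  by apply: (mulfI c2_nz); rewrite mulr0 -e3 c0_0 c1_0 !mul0r !add0r.
by rewrite N_0 q_0 expr0n mulr0 mul0r.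
Qed.

Section RankThree.
Variables (n : nat) (E : 'M[F]_n) (t1 t2 v v' x : 'I_n) (a0 a1 aj : F).
Hypotheses (E_rank : (\rank E <= 3)%N) (E_sym : forall a b, E a b = E b a).
Hypotheses (Et1t1 : E t1 t1 = a0) (Et2t2 : E t2 t2 = a0) (Evv : E v v = a0)
  (Ev'v' : E v' v' = a0) (Exx : E x x = a0).
Hypotheses (Et1t2 : E t1 t2 = a1) (Et1v : E t1 v = a1) (Et1v' : E t1 v' = a1).
Hypotheses (Et2v : E t2 v = aj) (Et2v' : E t2 v' = aj) (Evv' : E v v' = aj).

Lemma rank3_gram_identity : a0 ^+ 2 - a1 ^+ 2 != 0 ->
  (a0 ^+ 2 - a1 ^+ 2) * (E x v - E x v') ^+ 2
    = (2 * a0 - 2 * aj) * gram3_det a0 a1 (E x t1) (E x t2).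
Proof.
move=> D_nz.
pose R : 'M_(4, n) := \matrix_(i, b) [:: E t1 b; E t2 b; E v b - E v' b; E x b]`_i.
have R_sub : (R <= E)%MS.
  apply/row_subP => -[[|[|[|[|//]]]] lt_i4].
  - by apply: (eq_row_sub t1); apply/rowP => b; rewrite !mxE.
  - by apply: (eq_row_sub t2); apply/rowP => b; rewrite !mxE.
  - rewrite (_ : row _ R = row v E - row v' E); last by apply/rowP => b; rewrite !mxE.
    by rewrite addmx_sub ?eqmx_opp ?row_sub.
  - by apply: (eq_row_sub x); apply/rowP => b; rewrite !mxE.
have [w w_nz wR] := exists_nonzero_left_kernel (R := R) (leq_trans (mxrankS R_sub) E_rank).
have dep b : w 0 ord0 * E t1 b + w 0 (lift ord0 ord0) * E t2 b
    + w 0 (lift ord0 (lift ord0 ord0)) * (E v b - E v' b)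
    + w 0 (lift ord0 (lift ord0 (lift ord0 ord0))) * E x b = 0.
  move/matrixP: wR => /(_ 0 b); rewrite !mxE !big_ord_recl big_ord0 !mxE /=.
  by rewrite addr0 !addrA.
set c0 := w 0 ord0 in dep; set c1 := w 0 (lift ord0 ord0) in dep.
set c2 := w 0 (lift ord0 _) in dep; set c3 := w 0 (lift ord0 _) in dep.
have c_nz : ~~ [&& c0 == 0, c1 == 0, c2 == 0 & c3 == 0].
  apply: contra w_nz => /and4P[/eqP c0_0 /eqP c1_0 /eqP c2_0 /eqP c3_0].
  apply/eqP/rowP => i; rewrite mxE; case: i => -[|[|[|[|//]]]] lt_i4;
    [rewrite -c0_0 | rewrite -c1_0 | rewrite -c2_0 | rewrite -c3_0];
    by congr (w 0 _); apply: val_inj.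
apply: (gram4_kernel_det D_nz c_nz).
- rewrite -[RHS](dep t1) (E_sym t2) (E_sym v) (E_sym v') Et1t1 Et1t2 Et1v Et1v'.
  by rewrite subrr mulr0 addr0.
- rewrite -[RHS](dep t2) (E_sym v) (E_sym v') Et1t2 Et2t2 Et2v Et2v'.
  by rewrite subrr mulr0 addr0.
- rewrite -[RHS](subrr 0) -[X in _ = X - _](dep v) -[X in _ = _ - X](dep v') (E_sym v' v).
  by rewrite Et1v Et1v' Et2v Et2v' Evv Ev'v' Evv'; ring.
- by rewrite -[RHS](dep x) (E_sym t1) (E_sym t2) (E_sym v x) (E_sym v' x) Exx.
Qed.

End RankThree.

End GramDeterminant.

Lemma pair_of_sum_sq_diff (F : numFieldType) (s w y3 y4 : F) :
  y3 + y4 = s -> (y3 - y4) ^+ 2 = w ^+ 2 ->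
  (y3 = (s + w) / 2 /\ y4 = (s - w) / 2) \/ (y3 = (s - w) / 2 /\ y4 = (s + w) / 2).
Proof.
move=> <- /eqP; rewrite eqf_sqr => /orP[/eqP <- | /eqP/(canLR (@opprK _)) <-].
  by left; split; field.
by right; split; field.
Qed.

Lemma bose_mesner_entry n d (c : 'I_n -> 'I_n -> 'I_d.+1) (E : 'M[algC]_n) :
  in_bose_mesner c E -> exists al : 'I_d.+1 -> algC, forall a b, E a b = al (c a b).
Proof.
case=> al ->; exists al => a b; rewrite summxE (bigD1 (c a b)) //= big1.
  by rewrite !mxE eqxx mulr1 addr0.
by move=> i /negbTE ci; rewrite !mxE eq_sym ci mulr0.
Qed.

Section SchemeGraph.
Variables (n d : nat) (c : 'I_n -> 'I_n -> 'I_d.+1) (p : 'I_d.+1 -> 'I_d.+1 -> 'I_d.+1 -> nat).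
Hypothesis c_scheme : is_assoc_scheme c p.

Lemma scheme_diag x : c x x = ord0.
Proof. by case: c_scheme => c_diag _ _ _; apply/eqP; rewrite c_diag. Qed.

Lemma scheme_sym x y : c x y = c y x.
Proof. by case: c_scheme. Qed.

Lemma adj_sym x y : adj c x y = adj c y x.
Proof. by rewrite /adj scheme_sym. Qed.

Hypothesis a1_0 : p R1 R1 R1 = 0%N.

Lemma adj_triangle_free a b z : adj c a b -> adj c b z -> ~~ adj c a z.
Proof.
case: c_scheme => _ _ _ c_count /eqP ab /eqP bz; apply/negP => /eqP az.
have /eqP := c_count R1 R1 a z; rewrite az a1_0 cards_eq0 => /eqP no_mid.
by have := in_set0 b; rewrite -no_mid inE ab bz eqxx.
Qed.

Variable j : 'I_d.+1.
Hypothesis j_dist2 : forall x y, dist2 c x y = (c x y == j).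

Lemma adj2_class a b z : adj c a b -> adj c b z -> a != z -> c a z = j.
Proof.
move=> ab bz az; apply/eqP; rewrite -j_dist2 /dist2 az (adj_triangle_free ab bz) /=.
by apply/existsP; exists b; rewrite ab.
Qed.

Variables (E : 'M[algC]_n) (al : 'I_d.+1 -> algC) (theta : algC).
Hypotheses (E_class : forall a b, E a b = al (c a b))
  (E_eigen : rel_mx c R1 *m E = theta *: E).

Lemma class_mx_sym a b : E a b = E b a.
Proof. by rewrite !E_class scheme_sym. Qed.

Lemma adj_sum_eigen y z : \sum_(w in [set w | adj c y w]) E w z = theta * E y z.
Proof.
move/matrixP: E_eigen => /(_ y z); rewrite !mxE => <-.
by rewrite -sum_indicator_rel; apply: eq_bigr => w _; rewrite mxE.
Qed.

Lemma cosine_adj_sum x y :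
  \sum_(w in [set w | adj c y w]) cosine E x w = theta * cosine E x y.
Proof.
rewrite /cosine -mulr_suml; under eq_bigr do rewrite class_mx_sym.
by rewrite adj_sum_eigen class_mx_sym mulrA.
Qed.

Variable k : nat.
Hypotheses (c_conn : graph_connected c) (c_reg : forall x, #|[set y | adj c x y]| = k).

Lemma edge_class_sq_neq u :
  E u u != 0 -> (1 < \rank E)%N -> al ord0 ^+ 2 - al R1 ^+ 2 != 0.
Proof.
move=> Euu_nz E_rank; rewrite subr_eq0 eqf_sqr; apply: contraTN E_rank => al01.
have [e [e_sq e_real al1]] : exists e : algC, [/\ e ^+ 2 = 1, e^* = e & al R1 = e * al ord0].
  case/orP: al01 => /eqP al01; [exists 1 | exists (-1)].
    by rewrite expr1n conjC1 mul1r al01.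
  by rewrite sqrrN expr1n rmorphN1 al01 mulN1r opprK.
have Euu : E u u = al ord0 by rewrite E_class scheme_diag.
have theta_e : theta = k%:R * e.
  apply: (mulIf Euu_nz); rewrite -adj_sum_eigen.
  under eq_bigr => w /[!inE] uw do rewrite E_class scheme_sym (eqP uw).
  by rewrite sumr_const c_reg Euu al1 -mulrA mulr_natl.
have E_edge z y w : adj c y w -> E y z = e * E w z.
  apply: (eigvec_edge_eq adj_sym c_reg e_sq e_real (f := fun y => E y z)) => x.
  by rewrite sum_indicator_rel adj_sum_eigen theta_e.
rewrite -leqNgt; apply: (mxrank_le1_connected (r := adj c)) c_conn => y w yw.
apply/sub_rVP; exists e; apply/rowP => z; rewrite !mxE.
by apply: E_edge; rewrite adj_sym.
Qed.

Lemma neighbour_pair_identity x t1 t2 v v' :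
  (\rank E <= 3)%N -> al ord0 ^+ 2 - al R1 ^+ 2 != 0 ->
  adj c t1 t2 -> adj c t1 v -> adj c t1 v' -> v != v' -> v != t2 -> v' != t2 ->
  (al ord0 ^+ 2 - al R1 ^+ 2) * (E x v - E x v') ^+ 2
    = (2 * al ord0 - 2 * al j) * gram3_det (al ord0) (al R1) (E x t1) (E x t2).
Proof.
move=> E_rank D_nz t1t2 t1v t1v' vv'; rewrite ![_ == t2]eq_sym => t2v t2v'.
have diag y : E y y = al ord0 by rewrite E_class scheme_diag.
have edge y y' : adj c y y' -> E y y' = al R1 by rewrite E_class => /eqP ->.
have far y y' : adj c t1 y -> adj c t1 y' -> y != y' -> E y y' = al j.
  by move=> t1y t1y' yy'; rewrite E_class (adj2_class _ t1y' yy') // adj_sym.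
exact: (rank3_gram_identity E_rank class_mx_sym (diag t1) (diag t2) (diag v)
  (diag v') (diag x) (edge _ _ t1t2) (edge _ _ t1v) (edge _ _ t1v')
  (far _ _ t1t2 t1v t2v) (far _ _ t1t2 t1v' t2v') (far _ _ t1v t1v' vv') D_nz).
Qed.

Lemma cosine_diff_sq_eq x u1 u2 v1 v2 v3 v4 : \rank E = 3%N ->
  adj c u1 u2 -> adj c u1 v1 -> adj c u1 v2 -> v1 != v2 -> v1 != u2 -> v2 != u2 ->
  adj c u2 v3 -> adj c u2 v4 -> v3 != v4 -> v3 != u1 -> v4 != u1 ->
  (cosine E x v3 - cosine E x v4) ^+ 2 = (cosine E x v1 - cosine E x v2) ^+ 2.
Proof.
move=> E_rank u1u2 u1v1 u1v2 v12 v1u2 v2u2 u2v3 u2v4 v34 v3u1 v4u1.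
(* Cosines are junk 0 when E x x = 0, since x / 0 = 0. *)
have [Exx0 | Exx_nz] := eqVneq (E x x) 0.
  by rewrite /cosine Exx0 invr0 !mulr0.
have D_nz : al ord0 ^+ 2 - al R1 ^+ 2 != 0.
  by apply: (edge_class_sq_neq Exx_nz); rewrite E_rank.
have E_rank3 : (\rank E <= 3)%N by rewrite E_rank.
have u2u1 : adj c u2 u1 by rewrite adj_sym.
have := neighbour_pair_identity x E_rank3 D_nz u2u1 u2v3 u2v4 v34 v3u1 v4u1.
rewrite gram3_detC -(neighbour_pair_identity x E_rank3 D_nz u1u2 u1v1 u1v2 v12 v1u2 v2u2).
by move/(mulfI D_nz); rewrite /cosine -!mulrBl !exprMn => ->.
Qed.

End SchemeGraph.

Theorem lemma4p1 (n d : nat) (c : 'I_n -> 'I_n -> 'I_d.+1)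
  (p : 'I_d.+1 -> 'I_d.+1 -> 'I_d.+1 -> nat)
  (hd : (0 < d)%N)
  (hsch : is_assoc_scheme c p)
  (hpm : partially_metric c)
  (hconn : graph_connected c)
  (hk : forall x : 'I_n, #|[set y | adj c x y]| = 3%N)
  (ha1 : p R1 R1 R1 = 0%N)
  (E : 'M[algC]_n) (hE : minimal_idempotent c E) (hrk : \rank E = 3%N)
  (theta : algC) (htheta : rel_mx c R1 *m E = theta *: E)
  (u1 u2 v1 v2 v3 v4 x : 'I_n)
  (hu : adj c u1 u2)
  (hv1 : adj c u1 v1) (hv2 : adj c u1 v2) (hv12 : v1 != v2)
  (hv1u : v1 != u2) (hv2u : v2 != u2)
  (hv3 : adj c u2 v3) (hv4 : adj c u2 v4) (hv34 : v3 != v4)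
  (hv3u : v3 != u1) (hv4u : v4 != u1) :
  let psi1 := cosine E x u1 in let psi2 := cosine E x u2 in
  let phi1 := cosine E x v1 in let phi2 := cosine E x v2 in
  let phi3 := cosine E x v3 in let phi4 := cosine E x v4 in
  let a := (theta * psi2 - psi1 + (phi1 - phi2)) / 2 in
  let b := (theta * psi2 - psi1 - (phi1 - phi2)) / 2 in
  (phi3 = a /\ phi4 = b) \/ (phi3 = b /\ phi4 = a).
Proof.
rewrite /=; case: hE => E_bm _ _ _; have [j j_dist2] := hpm.
have [al E_class] := bose_mesner_entry E_bm.
apply: pair_of_sum_sq_diff.
  rewrite -(cosine_adj_sum hsch E_class htheta x u2).
  by rewrite (sum_card3 _ (hk u2) _ _ _ hv34 hv3u hv4u) ?addrK ?inE // (adj_sym hsch).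
exact: (cosine_diff_sq_eq hsch ha1 j_dist2 E_class htheta hconn hk x hrk hu hv1 hv2 hv12
  hv1u hv2u hv3 hv4 hv34 hv3u hv4u).
Qed.
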